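(* Let $\mathcal T$ and $\mathcal S$ be triangulated categories and let $T:\mathcal S\to\mathcal T$ be a triangle functor. Suppose $T$ has a left (respectively right) adjoint $S$. Let $M$ be an object of $\mathcal S$. Then the following are equivalent: (1) $M$ is $T$-relative projective (respectively injective); (2) $M$ is in $\mathrm{add}(\mathrm{im}(S))$; (3) $M$ is a direct factor of $S(L)$ for some object $L$ of $\mathcal T$; (4) $M$ is a direct factor of $ST(M)$.
   Context: An object $Q$ of $\mathcal S$ is $T$-relative projective if the natural transformation $\mathcal S(Q,-)\to\mathcal T(TQ,T-)$ induced by $T$ is injective, and $T$-relative injective if the natural transformation $\mathcal S(-,Q)\to\mathcal T(T-,TQ)$ induced by $T$ is injective. $\mathrm{add}(\mathrm{im}(S))$ is the full subcategory of direct summands of finite direct sums of objects in the image of $S$. *)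

From HB Require Import structures.
From mathcomp Require Import all_boot all_algebra.
Set Implicit Arguments. Unset Strict Implicit. Unset Printing Implicit Defensive.
Import GRing.Theory.
Local Open Scope ring_scope.

Record PreAdd := {
  Obj :> Type;
  Hom : Obj -> Obj -> zmodType;
  idm : forall X, Hom X X;
  cmp : forall X Y Z, Hom Y Z -> Hom X Y -> Hom X Z;
  cmpA : forall X Y Z W (h : Hom Z W) (g : Hom Y Z) (f : Hom X Y),
      cmp h (cmp g f) = cmp (cmp h g) f;
  cmp1l : forall X Y (f : Hom X Y), cmp (idm Y) f = f;
  cmp1r : forall X Y (f : Hom X Y), cmp f (idm X) = f;
  cmpDl : forall X Y Z (g g' : Hom Y Z) (f : Hom X Y),
      cmp (g + g') f = cmp g f + cmp g' f;
  cmpDr : forall X Y Z (g : Hom Y Z) (f f' : Hom X Y),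
      cmp g (f + f') = cmp g f + cmp g f'
}.
Arguments Hom {C} X Y : rename.
Arguments idm {C} X : rename.
Arguments cmp {C X Y Z} g f : rename.

Definition is_iso (C : PreAdd) (X Y : C) (f : Hom X Y) : Prop :=
  exists g : Hom Y X, cmp g f = idm X /\ cmp f g = idm Y.

Definition is_zero_obj (C : PreAdd) (Z : C) : Prop :=
  (forall X (f g : Hom Z X), f = g) /\ (forall X (f g : Hom X Z), f = g).

Definition is_biprod (C : PreAdd) (A B X : C)
  (i1 : Hom A X) (p1 : Hom X A) (i2 : Hom B X) (p2 : Hom X B) : Prop :=
  [/\ cmp p1 i1 = idm A, cmp p2 i2 = idm B, cmp p1 i2 = 0, cmp p2 i1 = 0
    & cmp i1 p1 + cmp i2 p2 = idm X].

Definition is_dsum (C : PreAdd) (n : nat) (A : 'I_n -> C) (X : C)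
  (i : forall k, Hom (A k) X) (p : forall k, Hom X (A k)) : Prop :=
  [/\ forall k, cmp (p k) (i k) = idm (A k),
      forall j k, j != k -> cmp (p j) (i k) = 0
    & \sum_(k < n) cmp (i k) (p k) = idm X].

Definition direct_summand (C : PreAdd) (M X : C) : Prop :=
  exists (N : C) (i1 : Hom M X) (p1 : Hom X M) (i2 : Hom N X) (p2 : Hom X N),
    is_biprod i1 p1 i2 p2.

Record AddCat := {
  preadd :> PreAdd;
  zobj : preadd;
  zobj_zero : is_zero_obj zobj;
  biprod_ex : forall A B : preadd, exists (X : preadd) (i1 : Hom A X) (p1 : Hom X A)
      (i2 : Hom B X) (p2 : Hom X B), is_biprod i1 p1 i2 p2
}.

Record Functor (C D : PreAdd) := {
  fo :> C -> D;
  fm : forall X Y : C, Hom X Y -> Hom (fo X) (fo Y);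
  fm1 : forall X, fm (idm X) = idm (fo X);
  fmC : forall X Y Z (g : Hom Y Z) (f : Hom X Y), fm (cmp g f) = cmp (fm g) (fm f)
}.
Arguments fm {C D} F {X Y} f : rename.

Definition additive_functor (C D : PreAdd) (F : Functor C D) : Prop :=
  forall X Y (f g : Hom X Y), fm F (f + g) = fm F f + fm F g.

(* Triangulated category (axioms TR1-TR4); the suspension Sig is an
   additive autoequivalence. *)
Record TriCat := {
  tcat :> AddCat;
  Sig : Functor tcat tcat;
  Sig_add : additive_functor Sig;
  Sig_ff : forall X Y : tcat, bijective (@fm _ _ Sig X Y);
  Sig_es : forall Y : tcat, exists (X : tcat) (u : Hom (Sig X) Y), is_iso u;
  dist : forall X Y Z : tcat, Hom X Y -> Hom Y Z -> Hom Z (Sig X) -> Prop;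
  TR1_iso : forall (X Y Z X' Y' Z' : tcat)
      (f : Hom X Y) (g : Hom Y Z) (h : Hom Z (Sig X))
      (f' : Hom X' Y') (g' : Hom Y' Z') (h' : Hom Z' (Sig X'))
      (a : Hom X X') (b : Hom Y Y') (c : Hom Z Z'),
      is_iso a -> is_iso b -> is_iso c ->
      cmp b f = cmp f' a -> cmp c g = cmp g' b -> cmp (fm Sig a) h = cmp h' c ->
      dist f g h -> dist f' g' h';
  TR1_id : forall X : tcat,
      dist (idm X) (0 : Hom X (zobj tcat)) (0 : Hom (zobj tcat) (Sig X));
  TR1_ex : forall (X Y : tcat) (f : Hom X Y),
      exists (Z : tcat) (g : Hom Y Z) (h : Hom Z (Sig X)), dist f g h;
  TR2 : forall (X Y Z : tcat) (f : Hom X Y) (g : Hom Y Z) (h : Hom Z (Sig X)),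
      dist f g h <-> dist g h (- fm Sig f);
  TR3 : forall (X Y Z X' Y' Z' : tcat)
      (f : Hom X Y) (g : Hom Y Z) (h : Hom Z (Sig X))
      (f' : Hom X' Y') (g' : Hom Y' Z') (h' : Hom Z' (Sig X'))
      (a : Hom X X') (b : Hom Y Y'),
      dist f g h -> dist f' g' h' -> cmp b f = cmp f' a ->
      exists c : Hom Z Z', cmp c g = cmp g' b /\ cmp (fm Sig a) h = cmp h' c;
  TR4 : forall (X Y Z Z' X' Y' : tcat) (f : Hom X Y) (g : Hom Y Z)
      (j : Hom Y Z') (k : Hom Z' (Sig X))
      (l : Hom Z X') (i : Hom X' (Sig Y))
      (m : Hom Z Y') (n : Hom Y' (Sig X)),
      dist f j k -> dist g l i -> dist (cmp g f) m n ->
      exists (u : Hom Z' Y') (v : Hom Y' X'),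
        [/\ dist u v (cmp (fm Sig j) i), cmp u j = cmp m g, cmp v m = l,
            cmp n u = k & cmp i v = cmp (fm Sig f) n]
}.
Arguments Sig {t} : rename.
Arguments dist {t X Y Z} f g h : rename.

Record TriFunctor (C D : TriCat) := {
  tfun :> Functor C D;
  tf_add : additive_functor tfun;
  tf_phi : forall X : C, Hom (tfun (Sig X)) (Sig (tfun X));
  tf_phi_iso : forall X, is_iso (tf_phi X);
  tf_phi_nat : forall (X Y : C) (f : Hom X Y),
      cmp (tf_phi Y) (fm tfun (fm Sig f)) = cmp (fm Sig (fm tfun f)) (tf_phi X);
  tf_dist : forall (X Y Z : C) (f : Hom X Y) (g : Hom Y Z) (h : Hom Z (Sig X)),
      dist f g h -> dist (fm tfun f) (fm tfun g) (cmp (tf_phi X) (fm tfun h))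
}.

(* L is left adjoint to R (unit/counit with triangle identities). *)
Definition adjunction (C D : PreAdd) (L : Functor D C) (R : Functor C D) : Prop :=
  exists (eta : forall Y : D, Hom Y (R (L Y))) (eps : forall X : C, Hom (L (R X)) X),
    [/\ forall (Y Y' : D) (f : Hom Y Y'), cmp (eta Y') f = cmp (fm R (fm L f)) (eta Y),
        forall (X X' : C) (f : Hom X X'), cmp f (eps X) = cmp (eps X') (fm L (fm R f)),
        forall Y : D, cmp (eps (L Y)) (fm L (eta Y)) = idm (L Y)
      & forall X : C, cmp (fm R (eps X)) (eta (R X)) = idm (R X)].

Definition rel_projective (C D : PreAdd) (T : Functor C D) (Q : C) : Prop :=
  forall (Y : C) (f g : Hom Q Y), fm T f = fm T g -> f = g.

Definition rel_injective (C D : PreAdd) (T : Functor C D) (Q : C) : Prop :=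
  forall (Y : C) (f g : Hom Y Q), fm T f = fm T g -> f = g.

Definition in_add_im (C D : PreAdd) (S : Functor D C) (M : C) : Prop :=
  exists (n : nat) (L : 'I_n -> D) (X : C)
    (i : forall k, Hom (S (L k)) X) (p : forall k, Hom X (S (L k))),
    is_dsum i p /\ direct_summand M X.

(* If [S] is left adjoint to [T] with unit [eta] and counit [eps], every
   [f : S L -> Y] factors as [eps Y \o S (T f \o eta L)], so [T] is faithful on
   morphisms out of [S L]; this faithfulness passes to finite direct sums and to
   direct summands, whence (2), (3), (4) => (1).  Conversely, if [M] is
   [T]-relative projective, [w \o eps M = 0] forces
   [T w = T w \o T (eps M) \o eta (T M) = 0], so [eps M] is an epimorphism.
   In a triangulated category monomorphisms and epimorphisms split: the
   connecting morphism of a triangle on a monomorphism vanishes, so the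
   triangle splits.  Hence (1) => (4).
   The injective case is the projective one for [T^op], whose left adjoint is
   [S^op]; only the preadditive structure has to be dualised. *)

From mathcomp Require Import all_boot all_algebra.
Set Implicit Arguments. Unset Strict Implicit. Unset Printing Implicit Defensive.
Import GRing.Theory.
Local Open Scope ring_scope.

Lemma all_iff4_congr (P0 P1 P2 P3 Q0 Q1 Q2 Q3 : Prop) :
  P0 <-> Q0 -> P1 <-> Q1 -> P2 <-> Q2 -> P3 <-> Q3 ->
  [<-> P0; P1; P2; P3] -> [<-> Q0; Q1; Q2; Q3].
Proof.
move=> e0 e1 e2 e3 eP; tfae.
- by move/e0/(eP 0 1)/e1.
- by move/e1/(eP 1 2)/e2.
- by move/e2/(eP 2 3)/e3.
- by move/e3/(eP 3 0)/e0.
Qed.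

Section AdditiveMaps.
Variables (U V : zmodType) (f : U -> V).
Hypothesis fD : {morph f : x y / x + y}.

Lemma additive_0 : f 0 = 0.
Proof. by apply: (addrI (f 0)); rewrite -fD !addr0. Qed.

Lemma additive_N x : f (- x) = - f x.
Proof. by apply: (addrI (f x)); rewrite -fD !subrr additive_0. Qed.

Lemma additive_B x y : f (x - y) = f x - f y.
Proof. by rewrite fD additive_N. Qed.

Lemma additive_sum n (F : 'I_n -> U) : f (\sum_(k < n) F k) = \sum_(k < n) f (F k).
Proof. exact: (big_morph f fD additive_0). Qed.

End AdditiveMaps.

Section Preadditive.
Variable C : PreAdd.
Implicit Types X Y Z : C.

Lemma cmp0l X Y Z (f : Hom X Y) : cmp (0 : Hom Y Z) f = 0.
Proof. exact: (additive_0 (fun g g' => cmpDl g g' f)). Qed.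

Lemma cmp0r X Y Z (g : Hom Y Z) : cmp g (0 : Hom X Y) = 0.
Proof. exact: (additive_0 (cmpDr g)). Qed.

Lemma cmpNl X Y Z (g : Hom Y Z) (f : Hom X Y) : cmp (- g) f = - cmp g f.
Proof. exact: (additive_N (fun g g' => cmpDl g g' f)). Qed.

Lemma cmpNr X Y Z (g : Hom Y Z) (f : Hom X Y) : cmp g (- f) = - cmp g f.
Proof. exact: (additive_N (cmpDr g)). Qed.

Lemma cmpBl X Y Z (g g' : Hom Y Z) (f : Hom X Y) : cmp (g - g') f = cmp g f - cmp g' f.
Proof. exact: (additive_B (fun g g' => cmpDl g g' f)). Qed.

Lemma cmpBr X Y Z (g : Hom Y Z) (f f' : Hom X Y) : cmp g (f - f') = cmp g f - cmp g f'.
Proof. exact: (additive_B (cmpDr g)). Qed.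

Lemma cmp_sumr X Y Z n (F : 'I_n -> Hom X Y) (g : Hom Y Z) :
  cmp g (\sum_(k < n) F k) = \sum_(k < n) cmp g (F k).
Proof. exact: (additive_sum (cmpDr g)). Qed.

End Preadditive.

Lemma fm0 (C D : PreAdd) (F : Functor C D) :
  additive_functor F -> forall X Y : C, fm F (0 : Hom X Y) = 0.
Proof. by move=> F_add X Y; exact: (additive_0 (F_add X Y)). Qed.

(* For morphisms of a preadditive category, cancelling against [0] is the
   same as being left (resp. right) cancellable. *)
Definition is_mono (C : PreAdd) (X Y : C) (f : Hom X Y) : Prop :=
  forall W (a : Hom W X), cmp f a = 0 -> a = 0.

Definition is_epi (C : PreAdd) (X Y : C) (f : Hom X Y) : Prop :=
  forall W (a : Hom Y W), cmp a f = 0 -> a = 0.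

Section Triangulated.
Variable C : TriCat.
Implicit Types X Y Z W : C.

Lemma Sig0 X Y : fm Sig (0 : Hom X Y) = 0.
Proof. exact: fm0 (@Sig_add C) X Y. Qed.

Lemma Sig_inj X Y (f g : Hom X Y) : fm Sig f = fm Sig g -> f = g.
Proof. exact: (bij_inj (Sig_ff X Y)). Qed.

Lemma Sig_surj X Y (h : Hom (Sig X) (Sig Y)) : exists f : Hom X Y, fm Sig f = h.
Proof. by have [g _ gK] := Sig_ff X Y; exists (g h); rewrite gK. Qed.

Lemma Sig_mono X Y (f : Hom X Y) : is_mono f -> is_mono (fm Sig f).
Proof.
move=> f_mono W a fa0.
have [W' [u [u' [u'u uu']]]] := Sig_es W.
have [a' a'E] := Sig_surj (cmp a u).
have fa'0 : cmp f a' = 0 by apply: Sig_inj; rewrite fmC a'E cmpA fa0 cmp0l Sig0.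
have au0 : cmp a u = 0 by rewrite -a'E (f_mono _ _ fa'0) Sig0.
by rewrite -(cmp1r a) -uu' cmpA au0 cmp0l.
Qed.

Lemma dist_comp0 X Y Z (f : Hom X Y) (g : Hom Y Z) (h : Hom Z (Sig X)) :
  dist f g h -> cmp g f = 0.
Proof.
move=> fgh; have [c [cE _]] := TR3 (TR1_id X) fgh (a := idm X) (b := f) erefl.
by rewrite -cE cmp0r.
Qed.

Lemma dist_exact X Y Z W (f : Hom X Y) (g : Hom Y Z) (h : Hom Z (Sig X)) (u : Hom W Y) :
  dist f g h -> cmp g u = 0 -> exists v : Hom W X, cmp f v = u.
Proof.
move=> fgh gu0.
have [c [_ cE]] := TR3 ((TR2 _ _ _).1 (TR1_id W)) ((TR2 _ _ _).1 fgh)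
  (a := u) (b := 0 : Hom (zobj C) Z) (ltac:(by rewrite cmp0r gu0)).
have [v vE] := Sig_surj c; exists v; apply: Sig_inj.
by move: cE; rewrite fm1 cmpNr cmp1r cmpNl -vE -fmC => /oppr_inj.
Qed.

Lemma dist_mono_connecting0 X Y Z (f : Hom X Y) (g : Hom Y Z) (h : Hom Z (Sig X)) :
  is_mono f -> dist f g h -> h = 0.
Proof.
move=> f_mono fgh; apply: (Sig_mono f_mono); apply: oppr_inj.
rewrite -cmpNl oppr0; exact: dist_comp0 ((TR2 _ _ _).1 ((TR2 _ _ _).1 fgh)).
Qed.

Lemma mono_summand M X (g : Hom M X) : is_mono g -> direct_summand M X.
Proof.
move=> g_mono; have [N [q [k gqk]]] := TR1_ex g.
have k0 := dist_mono_connecting0 g_mono gqk; subst k.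
have qg0 := dist_comp0 gqk.
have [i qi] := dist_exact (u := idm N) ((TR2 _ _ _).1 gqk) (cmp0l _ _).
have [r gr] := dist_exact (u := idm X - cmp i q) gqk
  (ltac:(by rewrite cmpBr cmp1r cmpA qi cmp1l subrr)).
exists N, g, r, i, q; split=> //.
- apply/eqP; rewrite -subr_eq0; apply/eqP/g_mono.
  by rewrite cmpBr cmpA gr cmpBl cmp1l cmp1r -cmpA qg0 cmp0r subr0 subrr.
- by apply/g_mono; rewrite cmpA gr cmpBl cmp1l -cmpA qi cmp1r subrr.
- by rewrite gr subrK.
Qed.

Lemma epi_summand M X (g : Hom X M) : is_epi g -> direct_summand M X.
Proof.
move=> g_epi; have [Z [w [h gwh]]] := TR1_ex g.
have w0 := g_epi _ _ (dist_comp0 gwh); subst w.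
have [s gs] := dist_exact (u := idm M) gwh (cmp0l _ _).
apply: (@mono_summand _ _ s) => W a sa0.
by rewrite -(cmp1l a) -gs -cmpA sa0 cmp0r.
Qed.

End Triangulated.

Section RelativeProjective.
Variables (C D : PreAdd) (T : Functor C D).

Lemma rel_projective_summand (M X : C) :
  rel_projective T X -> direct_summand M X -> rel_projective T M.
Proof.
move=> X_proj [N [i1 [p1 [i2 [p2 [p1i1 _ _ _ _]]]]]] Y f g Tfg.
rewrite -(cmp1r f) -(cmp1r g) -p1i1 !cmpA; congr (cmp _ _).
by apply: X_proj; rewrite !fmC Tfg.
Qed.

Lemma rel_projective_dsum n (A : 'I_n -> C) (X : C)
    (i : forall k, Hom (A k) X) (p : forall k, Hom X (A k)) :
  is_dsum i p -> (forall k, rel_projective T (A k)) -> rel_projective T X.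
Proof.
move=> [_ _ sum_ip] A_proj Y f g Tfg.
rewrite -(cmp1r f) -(cmp1r g) -sum_ip !cmp_sumr; apply: eq_bigr => k _.
rewrite !cmpA; congr (cmp _ _); apply: A_proj.
by rewrite !fmC Tfg.
Qed.

Lemma summand_in_add_im (S : Functor D C) (M : C) (L : D) :
  direct_summand M (S L) -> in_add_im S M.
Proof.
move=> ML; exists 1%N, (fun=> L), (S L), (fun=> idm _), (fun=> idm _).
split=> //; split.
- by move=> k; rewrite cmp1l.
- by move=> j k; rewrite !ord1.
- by rewrite big_ord1 cmp1l.
Qed.

Variable S : Functor D C.
Hypotheses (T_add : additive_functor T) (ST : adjunction S T).

Lemma rel_projective_adjoint_im (L : D) : rel_projective T (S L).
Proof.
have [eta [eps [_ eps_nat triL _]]] := ST.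
have factor (Y : C) (f : Hom (S L) Y) : f = cmp (eps Y) (fm S (cmp (fm T f) (eta L))).
  by rewrite fmC cmpA -eps_nat -cmpA triL cmp1r.
by move=> Y f g Tfg; rewrite (factor _ f) (factor _ g) Tfg.
Qed.

Lemma in_add_im_rel_projective (M : C) : in_add_im S M -> rel_projective T M.
Proof.
move=> [n [L [X [i [p [Xsum MX]]]]]].
apply: rel_projective_summand MX; apply: rel_projective_dsum Xsum _ => k.
exact: rel_projective_adjoint_im.
Qed.

Hypothesis epis_split : forall (M X : C) (g : Hom X M), is_epi g -> direct_summand M X.

Lemma rel_projective_split_counit (M : C) :
  rel_projective T M -> direct_summand M (S (T M)).
Proof.
have [eta [eps [_ _ _ triR]]] := ST.
move=> M_proj; apply: (@epis_split _ _ (eps M)) => W w weps0; apply: M_proj.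
by rewrite (fm0 T_add) -(cmp1r (fm T w)) -triR cmpA -fmC weps0 (fm0 T_add) cmp0l.
Qed.

Lemma rel_projective_TFAE (M : C) :
  [<-> rel_projective T M;
       in_add_im S M;
       exists L : D, direct_summand M (S L);
       direct_summand M (S (T M))].
Proof.
tfae.
- by move/rel_projective_split_counit/summand_in_add_im.
- by move/in_add_im_rel_projective/rel_projective_split_counit; exists (T M).
- case=> L ML; apply/rel_projective_split_counit.
  exact: rel_projective_summand (@rel_projective_adjoint_im L) ML.
- exact: rel_projective_summand (@rel_projective_adjoint_im (T M)).
Qed.

End RelativeProjective.

Definition op_cat (C : PreAdd) : PreAdd := {|
  Obj := C;
  Hom := fun X Y => Hom Y X;
  idm := @idm C;
  cmp := fun X Y Z g f => cmp f g;
  cmpA := fun X Y Z W h g f => esym (cmpA f g h);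
  cmp1l := fun X Y f => cmp1r f;
  cmp1r := fun X Y f => cmp1l f;
  cmpDl := fun X Y Z g g' f => cmpDr f g g';
  cmpDr := fun X Y Z g f f' => cmpDl f f' g |}.

Definition op_fun (C D : PreAdd) (F : Functor C D) : Functor (op_cat C) (op_cat D) :=
  @Build_Functor (op_cat C) (op_cat D) F (fun X Y f => fm F f) (fm1 F)
    (fun X Y Z g f => fmC F f g).

Section Duality.
Variables C D : PreAdd.

Lemma op_additive (F : Functor C D) : additive_functor F -> additive_functor (op_fun F).
Proof. by move=> F_add X Y; exact: F_add. Qed.

Lemma op_adjunction (L : Functor D C) (R : Functor C D) :
  adjunction L R -> adjunction (op_fun R) (op_fun L).
Proof.
move=> [eta [eps [eta_nat eps_nat ? ?]]].
by exists eps, eta; split=> // [X X' f | Y Y' f]; [exact: eps_nat | exact: eta_nat].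
Qed.

Lemma op_direct_summand (M X : C) : direct_summand (M : op_cat C) X <-> direct_summand M X.
Proof.
by split=> -[N [i1 [p1 [i2 [p2 [? ? ? ? ?]]]]]];
  exists N, p1, i1, p2, i2; split=> //; rewrite addrC.
Qed.

Lemma op_is_dsum n (A : 'I_n -> C) (X : C)
    (i : forall k, Hom (A k) X) (p : forall k, Hom X (A k)) :
  is_dsum (C := op_cat C) p i <-> is_dsum i p.
Proof.
by split=> -[? pi0 ?]; split=> // j k jk; apply: pi0; rewrite eq_sym.
Qed.

Lemma op_in_add_im (S : Functor D C) (M : C) : in_add_im (op_fun S) M <-> in_add_im S M.
Proof.
split=> -[n [L [X [i [p [Xsum MX]]]]]]; exists n, L, X, p, i;
  by split; [apply/op_is_dsum | apply/op_direct_summand].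
Qed.

End Duality.

Theorem proposition2p10 :
  (forall (SS TT : TriCat) (T : TriFunctor SS TT) (S : Functor TT SS),
      adjunction S T ->
      forall M : SS,
      [<-> rel_projective T M;
           in_add_im S M;
           exists L : TT, direct_summand M (S L);
           direct_summand M (S (T M))]) /\
  (forall (SS TT : TriCat) (T : TriFunctor SS TT) (S : Functor TT SS),
      adjunction T S ->
      forall M : SS,
      [<-> rel_injective T M;
           in_add_im S M;
           exists L : TT, direct_summand M (S L);
           direct_summand M (S (T M))]).
Proof.
split=> SS TT T S adj M.
  exact: rel_projective_TFAE (tf_add T) adj (@epi_summand SS) M.
have split_op (N X : op_cat SS) (g : Hom X N) : is_epi g -> direct_summand N X.
  by move/mono_summand/op_direct_summand.
have := rel_projective_TFAE (op_additive (tf_add T)) (op_adjunction adj) split_op M.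
apply: all_iff4_congr.
- by [].
- exact: op_in_add_im.
- by split=> -[L /op_direct_summand ML]; exists L.
- exact: op_direct_summand.
Qed.
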